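(* Let $q\ge5$ and let $\mu\in\mathbb F_q^*\setminus\{1\}$ if $q$ is even or $q\equiv0\pmod3$, and $\mu\in\mathbb F_q^*\setminus\{1,1/9\}$ if $q$ is odd and $q\not\equiv0\pmod3$. The number of $\overline{1_{\mathcal C}}$-planes containing the line $\ell_\mu$ equals $\widetilde N_1(\mu)$ if $\mu$ is a square in $\mathbb F_q$, and $\widetilde N_1(\mu)+1$ otherwise.
   Context: In $\mathrm{PG}(3,q)$ with points $\mathbf P(x_0,x_1,x_2,x_3)$, the twisted cubic is $\mathcal C=\{\mathbf P(t^3,t^2,t,1):t\in\mathbb F_q\}\cup\{\mathbf P(1,0,0,0)\}$. Its osculating planes ($\Gamma$-planes) are $x_0-3tx_1+3t^2x_2-t^3x_3=0$ for $t\in\mathbb F_q$ and $x_3=0$. A $\overline{1_{\mathcal C}}$-plane is a plane which is not a $\Gamma$-plane and contains exactly one point of $\mathcal C$. $\ell_\mu$ is the line through $\mathbf P(0,\mu,0,1)$ and $\mathbf P(1,0,1,0)$. $\widetilde N_1(\mu)$ is the number of $c\in\mathbb F_q^*$ such that $t^3+ct^2-t-\mu c=0$ has exactly one solution $t\in\mathbb F_q$. *)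

From mathcomp Require Import all_boot all_order all_algebra all_field.
Set Implicit Arguments. Unset Strict Implicit. Unset Printing Implicit Defensive.
Import GRing.Theory.
Local Open Scope ring_scope.

(* PG(3,q) over a finite field F, q = #|F|.  Points and planes are given by
   nonzero coordinate quadruples (x0,x1,x2,x3) up to nonzero scalars.
   Each plane is represented uniquely by its normalized coefficient vector
   (first nonzero coordinate equal to 1). *)

Section PG3.
Variable F : finFieldType.

Definition vec4 : finType := (F * F * F * F)%type.

Definition scale4 (k : F) (a : vec4) : vec4 :=
  let: (a0, a1, a2, a3) := a in (k * a0, k * a1, k * a2, k * a3).

Definition proportional (a b : vec4) : bool :=
  [exists k : F, (k != 0) && (a == scale4 k b)].

Definition normalized (a : vec4) : bool :=
  let: (a0, a1, a2, a3) := a in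
  if a0 != 0 then a0 == 1 else
  if a1 != 0 then a1 == 1 else
  if a2 != 0 then a2 == 1 else a3 == 1.

Definition incident (a x : vec4) : bool :=
  let: (a0, a1, a2, a3) := a in
  let: (x0, x1, x2, x3) := x in
  a0 * x0 + a1 * x1 + a2 * x2 + a3 * x3 == 0.

Definition curve_pt (t : F) : vec4 := (t ^+ 3, t ^+ 2, t, 1).
Definition curve_inf : vec4 := (1, 0, 0, 0).

(* number of points of C on the plane a (the points above are pairwise
   distinct, so we count parameters) *)
Definition nC (a : vec4) : nat :=
  #|[set t : F | incident a (curve_pt t)]| + (incident a curve_inf : nat).

Definition osc (t : F) : vec4 := (1, - (3%:R * t), 3%:R * t ^+ 2, - t ^+ 3).
Definition osc_inf : vec4 := (0, 0, 0, 1).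

Definition Gamma_plane (a : vec4) : bool :=
  [exists t : F, proportional a (osc t)] || proportional a osc_inf.

Definition one_C_bar_plane (a : vec4) : bool :=
  ~~ Gamma_plane a && (nC a == 1%N).

Definition contains_ell (mu : F) (a : vec4) : bool :=
  incident a (0, mu, 0, 1) && incident a (1, 0, 1, 0).

Definition num_1Cbar_planes_through_ell (mu : F) : nat :=
  #|[set a : vec4 | normalized a & contains_ell mu a && one_C_bar_plane a]|.

Definition Ntilde1 (mu : F) : nat :=
  #|[set c : F | (c != 0) &&
       (#|[set t : F | t ^+ 3 + c * t ^+ 2 - t - mu * c == 0]| == 1%N)]|.

Definition is_square (x : F) : bool := [exists y : F, y ^+ 2 == x].

End PG3.

From mathcomp Require Import all_boot all_order all_algebra all_field.
From mathcomp Require pgroup abelian.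
From mathcomp Require Import ring.
Import GRing.Theory.
Local Open Scope ring_scope.

(* The normalized planes through ell_mu are (1, c, -1, -mu c), c in F, and
   (0, 1, 0, -mu).  The plane (1, c, -1, -mu c) misses P(1,0,0,0) and meets the
   cubic at the roots of t^3 + c t^2 - t - mu c; it is never osculating, because
   equating it with the osculating plane at t forces 9 mu = 1, which the
   hypotheses exclude (in characteristic 2 this reads mu = 1, in characteristic 3
   it is impossible).  For c = 0 it contains the two points t = 0, 1.  The plane
   (0, 1, 0, -mu) is not osculating and meets the cubic at P(1,0,0,0) and at the
   t with t^2 = mu, so it counts exactly when mu is a non-square. *)

Lemma natr_prime_dvd_card (F : finFieldType) (p : nat) :
  prime p -> (p %| #|F|)%N -> p%:R = 0 :> F.
Proof.
move=> p_pr p_dvd; have [r r_pr r_char] := finPcharP F.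
have := abelian.abelem_pgroup (abelian.fin_ring_pchar_abelem r_char).
rewrite /pgroup.pgroup cardsT => F_r.
have := pnat_dvd p_dvd F_r; rewrite pnatE // => /eqnP ->.
exact: pcharf0 r_char.
Qed.

Section Proportional.
Variable F : finFieldType.
Implicit Types a b : vec4 F.

Definition support4 a : bool * bool * bool * bool :=
  let: (a0, a1, a2, a3) := a in (a0 != 0, a1 != 0, a2 != 0, a3 != 0).

Lemma proportional_support4 a b : proportional a b -> support4 a = support4 b.
Proof.
case: a b => [[[a0 a1] a2] a3] [[[b0 b1] b2] b3].
case/existsP => k /andP [k_neq0 /eqP [-> -> -> ->]].
by rewrite /= !mulf_eq0 (negbTE k_neq0).
Qed.

Lemma proportional_head1 a b :
  a.1.1.1 = 1 -> b.1.1.1 = 1 -> proportional a b = (a == b).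
Proof.
case: a b => [[[a0 a1] a2] a3] [[[b0 b1] b2] b3] /= -> ->.
apply/existsP/eqP => [[k /andP [_ /eqP [k1 -> -> ->]]] | ->].
  by move: k1; rewrite mulr1 => <-; rewrite !mul1r.
by exists 1; rewrite oner_eq0 /= !mul1r.
Qed.

End Proportional.

Section PlanesThroughEll.
Variables (F : finFieldType) (mu : F).

Definition ell_plane (c : F) : vec4 F := (1, c, -1, - (mu * c)).
Definition ell_plane_inf : vec4 F := (0, 1, 0, - mu).

Definition ell_cubic_roots (c : F) :=
  [set t : F | t ^+ 3 + c * t ^+ 2 - t - mu * c == 0].

Lemma ell_plane_inj : injective ell_plane.
Proof. by move=> c d [->]. Qed.

Lemma ell_plane_inf_notin (A : {set F}) : ell_plane_inf \notin ell_plane @: A.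
Proof. by apply/imsetP => -[c _ [/eqP]]; rewrite eq_sym oner_eq0. Qed.

Lemma normalized_contains_ell :
  [set a | normalized a & contains_ell mu a] =
  ell_plane_inf |: [set ell_plane c | c : F].
Proof.
apply/setP => -[[[a0 a1] a2] a3]; rewrite !inE /contains_ell /incident /=.
apply/idP/idP.
- case/andP=> a_norm /andP [/eqP eq_mu /eqP eq_1].
  have a2E : a2 = - a0 by apply/eqP; rewrite -addr_eq0 -eq_1; apply/eqP; ring.
  have a3E : a3 = - (mu * a1) by apply/eqP; rewrite -addr_eq0 -eq_mu; apply/eqP; ring.
  move: a_norm; rewrite a2E a3E; have [-> | a0_neq0] := eqVneq a0 0 => /=.
    have [-> | _ /eqP ->] := eqVneq a1 0 => /=.
      by rewrite oppr0 eqxx /= mulr0 oppr0 eq_sym oner_eq0.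
    by rewrite /ell_plane_inf mulr1 oppr0 eqxx.
  by move/eqP=> ->; apply/orP; right; apply/imsetP; exists a1.
- case/orP => [/eqP [-> -> -> ->] | /imsetP [c _ [-> -> -> ->]]] /=.
  all: by rewrite !(eqxx, oner_eq0) /=; apply/andP; split; apply/eqP; ring.
Qed.

Lemma nC_ell_plane c : nC (ell_plane c) = #|ell_cubic_roots c|.
Proof.
rewrite /nC /incident /= !mulr0 !addr0 !mulr1 oner_eq0 addn0.
by apply: eq_card => t; rewrite !inE; congr (_ == _); ring.
Qed.

Lemma nC_ell_plane_inf : nC ell_plane_inf = #|[set t : F | t ^+ 2 == mu]|.+1.
Proof.
rewrite /nC /incident /= !mulr0 !mul0r !addr0 eqxx addn1; congr _.+1.
by apply: eq_card => t; rewrite !inE -[t ^+ 2 == mu]subr_eq0; congr (_ == _); ring.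
Qed.

Lemma ell_plane_inf_not_Gamma : ~~ Gamma_plane ell_plane_inf.
Proof.
rewrite /Gamma_plane negb_or; apply/andP; split.
  by apply/existsPn => t; apply/negP => /proportional_support4 [];
     rewrite eqxx oner_eq0.
by apply/negP => /proportional_support4 []; rewrite eqxx oner_eq0.
Qed.

Lemma ell_plane_eq_osc c t : ell_plane c = osc t -> 9%:R * mu = 1.
Proof.
case=> c_eq t2_eq /oppr_inj mu_c.
have t_neq0 : t != 0.
  by apply: contra_eq_neq t2_eq => ->; rewrite expr0n mulr0 oppr_eq0 oner_eq0.
apply: (mulIf (mulf_neq0 t_neq0 t_neq0)); apply/eqP; rewrite mul1r -subr_eq0.
have -> : 9%:R * mu * (t * t) - t * t
          = 3%:R * t * (t ^+ 3 - mu * c) - t ^+ 2 * (1 + 3%:R * t ^+ 2).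
  by rewrite c_eq; ring.
by rewrite mu_c -t2_eq !subrr !mulr0 subrr.
Qed.

Hypothesis mu_neq1 : mu != 1.
Hypothesis mu_neq_inv9 : odd #|F| && (#|F| %% 3 != 0)%N -> mu != (9%:R)^-1.

Lemma nine_mu_neq1 : 9%:R * mu != 1.
Proof.
have [two0 | two_neq0] := eqVneq (2%:R : F) 0.
  have -> : (9%:R : F) = 1.
    by rewrite -[9%N]/(2 * 4 + 1)%N natrD natrM two0 mul0r add0r.
  by rewrite mul1r.
have [three0 | three_neq0] := eqVneq (3%:R : F) 0.
  by rewrite -[9%N]/(3 * 3)%N natrM three0 !mul0r eq_sym oner_eq0.
have odd_q : odd #|F|.
  rewrite -[odd _]negbK -dvdn2.
  by apply: contraNN two_neq0 => /(@natr_prime_dvd_card F 2 isT) ->.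
have q_not3 : (#|F| %% 3 != 0)%N.
  by apply: contraNN three_neq0 => /(@natr_prime_dvd_card F 3 isT) ->.
have nine_neq0 : (9%:R : F) != 0.
  by rewrite -[9%N]/(3 * 3)%N natrM mulf_neq0.
apply: contra (mu_neq_inv9 (introT andP (conj odd_q q_not3))) => /eqP nine_mu.
by rewrite -[mu](mulKf nine_neq0) nine_mu mulr1.
Qed.

Lemma ell_plane_not_Gamma c : ~~ Gamma_plane (ell_plane c).
Proof.
rewrite /Gamma_plane negb_or; apply/andP; split.
  apply/existsPn => t; apply: contra nine_mu_neq1.
  by rewrite proportional_head1 // => /eqP/ell_plane_eq_osc ->.
by apply/negP => /proportional_support4 []; rewrite eqxx oner_eq0.
Qed.

Lemma one_C_bar_ell_plane c :
  one_C_bar_plane (ell_plane c) = (c != 0) && (#|ell_cubic_roots c| == 1%N).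
Proof.
rewrite /one_C_bar_plane ell_plane_not_Gamma nC_ell_plane /=.
have [-> /= | //] := eqVneq c 0.
have roots0 : [set 0; 1] \subset ell_cubic_roots 0.
  by apply/subsetP => t; rewrite !inE => /orP [] /eqP ->; apply/eqP; ring.
move: (subset_leq_card roots0); rewrite cards2 eq_sym oner_eq0.
by case: #|_| => [|[]].
Qed.

Lemma one_C_bar_ell_plane_inf : one_C_bar_plane ell_plane_inf = ~~ is_square mu.
Proof.
rewrite /one_C_bar_plane ell_plane_inf_not_Gamma nC_ell_plane_inf eqSS cards_eq0.
apply/eqP/existsPn => [/setP no_root y | no_sqrt].
  by have := no_root y; rewrite !inE => ->.
by apply/setP => y; rewrite !inE; apply/negbTE.
Qed.

Lemma one_C_bar_planes_through_ell :
  [set a | normalized a & contains_ell mu a && one_C_bar_plane a] =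
  (if is_square mu then set0 else [set ell_plane_inf]) :|:
  ell_plane @: [set c | (c != 0) && (#|ell_cubic_roots c| == 1%N)].
Proof.
apply/setP => a; rewrite inE andbA.
have /setP/(_ a) := normalized_contains_ell; rewrite !inE => ->.
have [-> | a_neq_inf] /= := eqVneq a ell_plane_inf.
  rewrite one_C_bar_ell_plane_inf (negbTE (ell_plane_inf_notin _)) orbF.
  by case: is_square; rewrite !inE ?eqxx.
have a_notin_inf : a \notin (if is_square mu then set0 else [set ell_plane_inf]).
  by case: is_square; rewrite !inE.
rewrite (negbTE a_notin_inf) /=.
case: imsetP => [[c _ ->] | a_notin].
  by rewrite one_C_bar_ell_plane mem_imset ?inE //; exact: ell_plane_inj.
by apply/esym/imsetP => -[c _ a_c]; apply: a_notin; exists c.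
Qed.

End PlanesThroughEll.

Theorem lemma5p4 (F : finFieldType) (mu : F) :
  (5 <= #|F|)%N ->
  mu != 0 -> mu != 1 ->
  (odd #|F| && (#|F| %% 3 != 0)%N -> mu != (9%:R)^-1) ->
  num_1Cbar_planes_through_ell mu =
    (if is_square mu then Ntilde1 mu else (Ntilde1 mu).+1).
Proof.
(* The count does not need q >= 5 nor mu != 0. *)
move=> _ _ mu_neq1 mu_neq_inv9.
rewrite /num_1Cbar_planes_through_ell one_C_bar_planes_through_ell //.
case: is_square; first by rewrite set0U card_imset //; exact: ell_plane_inj.
by rewrite cardsU1 ell_plane_inf_notin card_imset //; exact: ell_plane_inj.
Qed.
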